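(* Assume the setting in the context, with a decomposition of $\mathcal X$ over $A$, $g\in\mathcal G_s$ and $\alpha\in(0,1)$. Let $\mathcal V$ be any subspace of $\mathcal U$ with $\mathcal U=\big(\bigoplus_{i\in\mathcal I}\mathcal E_i\big)\oplus\mathcal V$. If $\{(A,B|_{\mathcal E_i},g,\alpha)\}_{i\in\mathcal I}$ is a decomposition (Definition 1) of $(A,B,g,\alpha)$, then $A(\mathcal X)\cap B(\mathcal V)=\{0\}$.
   Context: Let $\mathcal F$ be a field and $\mathcal X,\mathcal U$ finite-dimensional vector spaces over $\mathcal F$. Let $A:\mathcal X\to\mathcal X$ and $B:\mathcal U\to\mathcal X$ be linear maps with $B$ injective, and consider $x_{t+1}=Ax_t+Bu_t$ and a cost $g:\mathcal X\to\mathbb R_{\ge0}$ with $g(x)=0\iff x=0$. Standing assumption: all minima appearing below are attained. Infinite-horizon problem $(A,B,g,\alpha)$: policies $\pi(x_0)=(\pi_t(x_0))_{t\in\mathbb Z_+}\in\mathcal U^{\mathbb Z_+}$, cost $J(x_0,\pi)=\sum_{t\ge0}\alpha^tg(x_t)$ with $x_{t+1}=Ax_t+B\pi_t(x_0)$; $J^*(x_0)=\min_\pi J(x_0,\pi)$, which satisfies the Bellman equation $J^*(x)=g(x)+\alpha\min_{u}J^*(Ax+Bu)$; minimizing policies are optimal. A decomposition of $\mathcal X$ over $A$ is a direct sum $\mathcal X=\mathcal X_1\oplus\cdots\oplus\mathcal X_r$ with $r>1$ and $A\mathcal X_i\subseteq\mathcal X_i$, $i\in\mathcal I=\{1,\dots,r\}$;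 $\rho_i:\mathcal X\to\mathcal X_i$ is the projection along the other summands. $\mathcal G_s$ is the set of $h:\mathcal X\to\mathbb R_{\ge0}$ with $h(x)=\sum_i h(\rho_i(x))$ for all $x$. $\mathcal E_i=\{u\in\mathcal U:Bu\in\mathcal X_i\}$ (the sum of the $\mathcal E_i$ is direct since $B$ is injective). Subproblem $(A,B|_{\mathcal E_i},g,\alpha)$: same problem for $x_{i,t+1}=Ax_{i,t}+B\bar u_{i,t}$ with states in $\mathcal X_i$ and inputs in $\mathcal E_i$; optimal cost $\bar J_i^*$, optimal policies $\bar\pi_i^*$. Definition 1: the family is a decomposition of $(A,B,g,\alpha)$ if for every $x$: $J^*(x)=\sum_i\bar J_i^*(\rho_i(x))$, and for every choice of optimal policies $\bar\pi_i^*(\rho_i(x))$ there is an optimal policy $\pi^*(x)$ with $\pi^*(x)=\sum_i\bar\pi_i^*(\rho_i(x))$. *)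

From HB Require Import structures.
From mathcomp Require Import all_boot all_order all_algebra.
From Stdlib Require Import Reals.
Set Implicit Arguments. Unset Strict Implicit. Unset Printing Implicit Defensive.
Import GRing.Theory.

(* Extended nonnegative cost values: Some c = finite cost c, None = +infinity. *)
Definition ecost := option R.

Definition ele (a b : ecost) : Prop :=
  match a, b with
  | Some x, Some y => Rle x y
  | _, None => True
  | None, Some _ => False
  end.

Definition eadd (a b : ecost) : ecost :=
  match a, b with
  | Some x, Some y => Some (Rplus x y)
  | _, _ => None
  end.

Definition series_value (f : nat -> R) (c : ecost) : Prop :=
  match c with
  | Some l => infinite_sum f l
  | None => ~ (exists l, infinite_sum f l)
  end.

Section Dyn.
Variables (F : fieldType) (X U : vectType F).

Fixpoint traj (A : 'End(X)) (B : 'Hom(U, X)) (x0 : X) (u : nat -> U) (t : nat)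
  : X :=
  match t with
  | O => x0
  | S t' => GRing.add (A (traj A B x0 u t')) (B (u t'))
  end.

Definition Jcost (A : 'End(X)) (B : 'Hom(U, X)) (g : X -> R) (alpha : R)
  (x0 : X) (u : nat -> U) (c : ecost) : Prop :=
  series_value (fun t => Rmult (pow alpha t) (g (traj A B x0 u t))) c.

Definition admissible (E : {vspace U}) (u : nat -> U) : Prop :=
  forall t, u t \in E.

Definition OptCost (A : 'End(X)) (B : 'Hom(U, X)) (E : {vspace U})
  (g : X -> R) (alpha : R) (x0 : X) (c : ecost) : Prop :=
  (exists u, admissible E u /\ Jcost A B g alpha x0 u c) /\
  (forall u' c', admissible E u' -> Jcost A B g alpha x0 u' c' -> ele c c').

Definition OptPolicy (A : 'End(X)) (B : 'Hom(U, X)) (E : {vspace U})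
  (g : X -> R) (alpha : R) (x0 : X) (u : nat -> U) : Prop :=
  admissible E u /\
  exists c, Jcost A B g alpha x0 u c /\ OptCost A B E g alpha x0 c.

Definition is_decomposition (r : nat) (A : 'End(X)) (B : 'Hom(U, X))
  (E : 'I_r -> {vspace U}) (rho : 'I_r -> X -> X) (g : X -> R) (alpha : R)
  : Prop :=
  forall x : X,
    (forall (c : ecost) (ci : 'I_r -> ecost),
        OptCost A B fullv g alpha x c ->
        (forall i, OptCost A B (E i) g alpha (rho i x) (ci i)) ->
        c = \big[eadd/Some R0]_(i < r) ci i) /\
    (forall ui : 'I_r -> nat -> U,
        (forall i, OptPolicy A B (E i) g alpha (rho i x) (ui i)) ->
        OptPolicy A B fullv g alpha x (fun t => \big[GRing.add/GRing.zero]_(i < r) ui i t)).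

End Dyn.

From HB Require Import structures.
From mathcomp Require Import all_boot all_order all_algebra.
From Stdlib Require Import Reals Lra.
Set Implicit Arguments. Unset Strict Implicit. Unset Printing Implicit Defensive.
Import GRing.Theory.

(* If [A x = B v] with [v] in [V], the input [-v] at time 0 drives [x] to 0 at
   once, so J*(x) <= g(x).  By the decomposition J*(x) is the sum of the
   subproblem costs at the components [rho i x], and each of these is at least
   g(rho i x) + alpha g(x_{i,1}); since g(x) is the sum of the g(rho i x), every
   subproblem must also reach 0 in one step, with some input w_i in E_i.  Then
   B v = A x = - B (sum_i w_i), so v = - sum_i w_i lies in (sum_i E_i) /\ V = 0. *)

Section RealSums.
Local Open Scope R_scope.

Lemma infinite_sum_ge_partial (f : nat -> R) l n :
  (forall t, 0 <= f t) -> infinite_sum f l -> sum_f_R0 f n <= l.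
Proof.
move=> f_ge0 fl; apply: growing_ineq => // m /=.
by have := f_ge0 (S m); lra.
Qed.

Lemma infinite_sum_head (f : nat -> R) :
  (forall t, f (S t) = 0) -> infinite_sum f (f O).
Proof.
move=> f_tail0 e e_gt0; exists O => n _.
have -> : sum_f_R0 f n = f O by elim: n => [|n IHn] //=; rewrite IHn f_tail0; lra.
by rewrite /R_dist Rminus_diag Rabs_R0.
Qed.

Lemma ele_trans (a b c : ecost) : ele a b -> ele b c -> ele a c.
Proof. by case: a b c => [x|] [y|] [z|] //=; apply: Rle_trans. Qed.

Lemma big_eadd_ge (I : Type) (s : seq I) (c : I -> ecost) (a : I -> R) :
  (forall i, ele (Some (a i)) (c i)) ->
  ele (Some (\big[Rplus/R0]_(i <- s) a i)) (\big[eadd/Some R0]_(i <- s) c i).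
Proof.
move=> a_le_c; elim: s => [|i s IHs]; rewrite ?big_nil ?big_cons /=; first lra.
move: (a_le_c i) IHs.
by case: (c i) => [ci|] //; case: (\big[eadd/_]_(j <- s) c j) => [cs|] //=; lra.
Qed.

Lemma big_Rplus_le (I : Type) (s : seq I) (a b : I -> R) :
  (forall i, a i <= b i) ->
  \big[Rplus/R0]_(i <- s) a i <= \big[Rplus/R0]_(i <- s) b i.
Proof.
move=> a_le_b; elim: s => [|i s IHs]; rewrite ?big_nil ?big_cons; first lra.
by have := a_le_b i; lra.
Qed.

Lemma big_Rplus_le_eq (I : eqType) (s : seq I) (a b : I -> R) :
  (forall i, a i <= b i) ->
  \big[Rplus/R0]_(i <- s) b i <= \big[Rplus/R0]_(i <- s) a i ->
  forall i, i \in s -> a i = b i.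
Proof.
move=> a_le_b; elim: s => [|j s IHs] //; rewrite !big_cons => sum_le i.
have := big_Rplus_le s a_le_b; have := a_le_b j => ab_j ab_s.
rewrite in_cons => /orP[/eqP-> | i_s]; first lra.
by apply: IHs i_s; lra.
Qed.

End RealSums.

Section OneStep.
Local Open Scope ring_scope.

Variables (F : fieldType) (X U : vectType F).
Variables (A : 'End(X)) (B : 'Hom(U, X)) (g : X -> R) (alpha : R).
Hypothesis g_ge0 : forall x, Rle R0 (g x).
Hypothesis alpha_ge0 : Rle R0 alpha.

Definition impulse (w : U) (t : nat) : U := if t is O then w else 0.

Lemma traj_impulse_deadbeat x w t :
  A x + B w = 0 -> traj A B x (impulse w) t.+1 = 0.
Proof.
move=> Axw0; elim: t => [|t IHt] //.
rewrite -[traj _ _ _ _ t.+2]/(A (traj A B x (impulse w) t.+1) + B 0).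
by rewrite IHt !linear0 addr0.
Qed.

Lemma Jcost_impulse_deadbeat x w :
  g 0 = R0 -> A x + B w = 0 -> Jcost A B g alpha x (impulse w) (Some (g x)).
Proof.
move=> g0 Axw0; rewrite /Jcost /=.
have -> : g x = Rmult (pow alpha 0) (g (traj A B x (impulse w) 0)) by rewrite /=; ring.
apply: infinite_sum_head => t.
by rewrite traj_impulse_deadbeat // g0; ring.
Qed.

Lemma OptCost_le_deadbeat (E : {vspace U}) x w c :
  g 0 = R0 -> w \in E -> A x + B w = 0 ->
  OptCost A B E g alpha x c -> ele c (Some (g x)).
Proof.
move=> g0 Ew Axw0 [_ c_min]; apply: c_min (Jcost_impulse_deadbeat g0 Axw0).
by case=> [|t] //=; rewrite mem0v.
Qed.

Lemma OptCost_ge_first_step (E : {vspace U}) x c :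
  OptCost A B E g alpha x c ->
  exists2 w, w \in E & ele (Some (Rplus (g x) (Rmult alpha (g (A x + B w))))) c.
Proof.
case=> -[u [u_adm Ju]] _; exists (u O) => //.
case: c Ju => [c|] //= Ju.
have terms_ge0 t : Rle R0 (Rmult (pow alpha t) (g (traj A B x u t))).
  by apply: Rmult_le_pos; [apply: pow_le | apply: g_ge0].
by have /= := infinite_sum_ge_partial 1 terms_ge0 Ju; lra.
Qed.

Lemma first_step_cost_eq0 x y :
  Rlt R0 alpha -> (forall z, g z = R0 -> z = 0) ->
  Rplus (g x) (Rmult alpha (g y)) = g x -> y = 0.
Proof.
move=> alpha_gt0 g_def step_eq; apply: g_def.
have [gy_gt0|//] := Rle_lt_or_eq_dec _ _ (g_ge0 y).
by have := Rmult_lt_0_compat _ _ alpha_gt0 gy_gt0; lra.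
Qed.

End OneStep.

Theorem proposition8
  (F : fieldType) (X U : vectType F)
  (A : 'End(X)) (B : 'Hom(U, X))
  (B_inj : injective (fun u : U => B u))
  (r : nat) (r_gt1 : (1 < r)%N)
  (Xs : 'I_r -> {vspace X})
  (Xs_direct : directv (\sum_(i < r) Xs i)%VS)
  (Xs_full : (\sum_(i < r) Xs i)%VS = fullv)
  (Xs_inv : forall i, (A @: Xs i <= Xs i)%VS)
  (rho : 'I_r -> X -> X)
  (rho_spec : forall x : X,
      (forall i, rho i x \in Xs i) /\ x = \big[GRing.add/GRing.zero]_(i < r) rho i x)
  (g : X -> R)
  (g_nonneg : forall x, Rle R0 (g x))
  (g_zero : forall x, g x = R0 <-> x = GRing.zero)
  (g_sep : forall x, g x = \big[Rplus/R0]_(i < r) g (rho i x))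
  (alpha : R) (alpha_pos : Rlt R0 alpha) (alpha_lt1 : Rlt alpha R1)
  (V : {vspace U})
  (V_compl : ((\sum_(i < r) (B @^-1: Xs i)%VS) :&: V)%VS = 0%VS)
  (V_full : ((\sum_(i < r) (B @^-1: Xs i)%VS) + V)%VS = fullv)
  (attained_full : forall x : X, exists c, OptCost A B fullv g alpha x c)
  (attained_sub : forall i (x : X), x \in Xs i ->
      exists c, OptCost A B (B @^-1: Xs i)%VS g alpha x c)
  (Hdec : is_decomposition A B (fun i => (B @^-1: Xs i)%VS) rho g alpha) :
  (limg A :&: (B @: V))%VS = 0%VS.
Proof.
Local Open Scope ring_scope.
have alpha_ge0 := Rlt_le _ _ alpha_pos.
apply/eqP; rewrite -subv0; apply/subvP => _ /[!memv_cap] /andP[/memv_imgP[x _ ->]].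
case/memv_imgP=> v Vv Ax_Bv.
have [c Jx] := attained_full x.
have c_le_gx : ele c (Some (g x)).
  apply: (OptCost_le_deadbeat _ (memvf (- v))) Jx; first exact/g_zero.
  by rewrite linearN /= Ax_Bv subrr.
have [ci Jxi] := fin_all_exists (fun i => attained_sub i _ ((rho_spec x).1 i)).
have [w Ew first_step] :=
  fin_all_exists2 (fun i => OptCost_ge_first_step g_nonneg alpha_ge0 (Jxi i)).
have steps0 i : A (rho i x) + B (w i) = 0.
  apply: (first_step_cost_eq0 g_nonneg alpha_pos (fun z => (g_zero z).1)).
  pose step_cost j := Rplus (g (rho j x)) (Rmult alpha (g (A (rho j x) + B (w j)))).
  symmetry; apply: (@big_Rplus_le_eq _ _ (fun j => g (rho j x)) step_cost _ _ i (mem_index_enum i)).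
  - move=> j; have := Rmult_le_pos _ _ alpha_ge0 (g_nonneg (A (rho j x) + B (w j))).
    by rewrite /step_cost; lra.
  - have := ele_trans (big_eadd_ge (index_enum _) first_step).
    by rewrite -((Hdec x).1 c ci Jx Jxi) -g_sep => /(_ _ c_le_gx).
have v_sum : v = - \sum_(i < r) w i.
  apply: B_inj; rewrite /= linearN linear_sum /= -Ax_Bv {1}(rho_spec x).2 linear_sum.
  apply/eqP; rewrite -subr_eq0 opprK -big_split.
  by apply/eqP/big1 => i _; apply: steps0.
have : v \in ((\sum_(i < r) (B @^-1: Xs i)%VS) :&: V)%VS.
  by rewrite memv_cap Vv v_sum rpredN andbT; apply: memv_sumr.
by rewrite V_compl memv0 Ax_Bv => /eqP->; rewrite linear0 mem0v.
Qed.
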